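(* Let $\mathcal{V}$ be a finite set of nodes, $\mathcal{P}$ a finite set of labels, $\mathcal{E}$ a set of unordered pairs of nodes, and $\theta_{ip},\theta_{ij,pq}\in\mathbb{R}$ unary and pairwise potential values. For $\vec{y}\in\{0,1\}^{\mathcal{V}\times\mathcal{P}}$ and $\vec{\lambda}\in\mathbb{R}^{\mathcal{V}}$ let $$L(\vec{y},\vec{\lambda})=\sum_{i\in\mathcal{V}}\sum_{p\in\mathcal{P}}\theta_{ip}y_{ip}+\sum_{\{i,j\}\in\mathcal{E}}\sum_{p,q\in\mathcal{P}}\theta_{ij,pq}y_{ip}y_{jq}+\sum_{i\in\mathcal{V}}\lambda_i\Big(\sum_{p\in\mathcal{P}}y_{ip}-1\Big)$$ and $D(\vec{\lambda})=\min_{\vec{y}\in\{0,1\}^{\mathcal{V}\times\mathcal{P}}}L(\vec{y},\vec{\lambda})$. If $\vec{\lambda}^*$ is a maximum point of $D$ over $\mathbb{R}^{\mathcal{V}}$, then $\vec{\lambda}^*$ satisfies the weak agreement condition.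
   Context: For $\vec\lambda\in\mathbb{R}^{\mathcal V}$, $i\in\mathcal V$, $p\in\mathcal P$, define $Z_{ip}(\vec\lambda)=\{z\in\{0,1\}:\ \exists\,\vec y^{\vec\lambda}\in\operatorname{Argmin}_{\vec y\in\{0,1\}^{\mathcal V\times\mathcal P}}L(\vec y,\vec\lambda)\text{ with }y^{\vec\lambda}_{ip}=z\}$, i.e. the set of values the variable $y_{ip}$ takes among all minimizers of the Lagrangian. A point $\vec\lambda$ satisfies the weak agreement condition if for every node $i\in\mathcal V$: (1) there exists $p\in\mathcal P$ with $1\in Z_{ip}(\vec\lambda)$; and (2) for every $p\in\mathcal P$, if $Z_{ip}(\vec\lambda)=\{1\}$ then $0\in Z_{iq}(\vec\lambda)$ for all $q\ne p$. *)

From mathcomp Require Import all_boot all_order all_algebra.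
From mathcomp Require Import reals.
Set Implicit Arguments. Unset Strict Implicit. Unset Printing Implicit Defensive.
Import Order.TTheory GRing.Theory Num.Theory.
Local Open Scope ring_scope.

Section MRF.
Variables (R : realType) (V P : finType).

Definition labeling := {ffun V * P -> bool}.

(* Edges: E is a set of ordered pairs (i,j),
   each unordered edge {i,j} represented by exactly one orientation
   (see hypotheses of the theorem); theta2 i j p q = theta_{ij,pq}. *)
Definition lagrangian (theta1 : V -> P -> R) (theta2 : V -> V -> P -> P -> R)
  (E : {set V * V}) (y : labeling) (lam : V -> R) : R :=
  \sum_(i : V) \sum_(p : P) theta1 i p * (y (i, p))%:R
  + \sum_(e in E) \sum_(p : P) \sum_(q : P)
        theta2 e.1 e.2 p q * (y (e.1, p))%:R * (y (e.2, q))%:R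
  + \sum_(i : V) lam i * ((\sum_(p : P) (y (i, p))%:R) - 1).

Definition dual theta1 theta2 E (lam : V -> R) : R :=
  \big[Num.min/lagrangian theta1 theta2 E [ffun _ => false] lam]_(y : labeling)
     lagrangian theta1 theta2 E y lam.

Definition is_minimizer theta1 theta2 E (lam : V -> R) (y : labeling) : Prop :=
  forall y' : labeling,
    lagrangian theta1 theta2 E y lam <= lagrangian theta1 theta2 E y' lam.

Definition inZ theta1 theta2 E (lam : V -> R) (i : V) (p : P) (z : bool) : Prop :=
  exists y : labeling, is_minimizer theta1 theta2 E lam y /\ y (i, p) = z.

Definition weak_agreement theta1 theta2 E (lam : V -> R) : Prop :=
  forall i : V,
    (exists p : P, inZ theta1 theta2 E lam i p true) /\
    (forall p : P,
        (inZ theta1 theta2 E lam i p true /\ ~ inZ theta1 theta2 E lam i p false) ->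
        forall q : P, q != p -> inZ theta1 theta2 E lam i q false).

End MRF.

From mathcomp Require Import all_boot all_order all_algebra.
From mathcomp Require Import reals.
From mathcomp Require Import lra.
From Stdlib Require Import Classical.
Set Implicit Arguments. Unset Strict Implicit. Unset Printing Implicit Defensive.
Import Order.TTheory GRing.Theory Num.Theory.
Local Open Scope ring_scope.

(** The dual [D] is the pointwise minimum of the finitely many functions
    [lam |-> L y lam], each affine in every coordinate [lam i]; moving [lam i]
    by [t * d] changes [L y] by [t * d * (n_i(y) - 1)], where [n_i(y)] is the
    number of labels [y] gives to [i].  If this slope is positive for every
    minimizer at [lam], then [D] increases for small [t > 0]: the minimizers
    go up, and the other labelings keep their positive slack for [t] small.
    So at a maximum of [D] no direction makes all minimizer slopes positive.
    If condition (1) fails at [i], every minimizer has [n_i = 0] and [d = -1]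
    is such a direction; if (2) fails, every minimizer gives [i] both labels
    [p] and [q], so [n_i >= 2] and [d = 1] is one. *)

Section SmallSteps.
Variable R : realFieldType.

Definition near_0plus (Q : R -> Prop) : Prop :=
  exists e, 0 < e /\ forall e', 0 < e' -> e' <= e -> Q e'.

Lemma near_0plus_all_seq (T : eqType) (Q : T -> R -> Prop) (s : seq T) :
  (forall y, near_0plus (Q y)) -> near_0plus (fun e => forall y, y \in s -> Q y e).
Proof.
move=> HQ; elim: s => [|a s [e [e_gt0 He]]]; first by exists 1.
have [ea [ea_gt0 Ha]] := HQ a.
exists (Num.min e ea); split; first by rewrite lt_min e_gt0 ea_gt0.
move=> e' e'_gt0; rewrite le_min => /andP[le_e le_ea] y.
by rewrite inE => /predU1P[->|ys]; [exact: Ha | exact: He].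
Qed.

Lemma near_0plus_all (T : finType) (Q : T -> R -> Prop) :
  (forall y, near_0plus (Q y)) -> near_0plus (fun e => forall y, Q y e).
Proof.
move=> /(near_0plus_all_seq (index_enum T)) [e [e_gt0 He]].
by exists e; split => // e' e'_gt0 le_e y; apply: He => //; exact: mem_index_enum.
Qed.

Lemma near_0plus_affine_gt (m a b : R) :
  m <= a -> (a = m -> 0 < b) -> near_0plus (fun e => m < a + e * b).
Proof.
move=> m_le_a b_pos; have [a_eq_m|a_neq_m] := eqVneq a m.
  exists 1; split => // e' e'_gt0 _.
  have := mulr_gt0 e'_gt0 (b_pos a_eq_m); lra.
have slack : 0 < a - m by rewrite subr_gt0 lt_neqAle eq_sym a_neq_m m_le_a.
have nb1_gt0 : 0 < `|b| + 1 by have := normr_ge0 b; lra.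
set e := (a - m) / (`|b| + 1).
have e_gt0 : 0 < e by apply: divr_gt0.
have e_nb1 : e * (`|b| + 1) = a - m by rewrite divfK // gt_eqF.
exists e; split => // e' e'_gt0 le_e.
have /ler_normlP[Nb_le _] := lexx `|b|.
have := ler_wpM2l (ltW e'_gt0) Nb_le.
have := ler_wpM2r (normr_ge0 b) le_e.
nra.
Qed.

Lemma min_affine_increase (T : finType) (a b : T -> R) (m : R) :
  (forall y, m <= a y) -> (forall y, a y = m -> 0 < b y) ->
  exists e, 0 < e /\ forall y, m < a y + e * b y.
Proof.
move=> m_le b_pos.
have [e [e_gt0 He]] :=
  near_0plus_all (fun y => near_0plus_affine_gt (m_le y) (@b_pos y)).
by exists e; split => //; apply: He.
Qed.

End SmallSteps.

Section Lagrangian.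
Context {R : realType} {V P : finType} (E : {set V * V})
  (theta1 : V -> P -> R) (theta2 : V -> V -> P -> P -> R).

Local Notation L := (lagrangian theta1 theta2 E).
Local Notation D := (dual theta1 theta2 E).
Local Notation is_min := (is_minimizer theta1 theta2 E).

Definition nlabels (y : labeling V P) (i : V) : R := \sum_(p : P) (y (i, p))%:R.

Lemma nlabels_eq0 (y : labeling V P) i :
  (forall p, y (i, p) = false) -> nlabels y i = 0.
Proof. by move=> y_false; apply: big1 => p _; rewrite y_false. Qed.

Lemma nlabels_ge2 (y : labeling V P) i p q :
  p != q -> y (i, p) -> y (i, q) -> 2 <= nlabels y i.
Proof.
move=> p_ne_q yp yq; rewrite /nlabels (bigD1 p) // (bigD1 q) 1?eq_sym //= yp yq /=.
have : 0 <= \sum_(r | (r != p) && (r != q)) (y (i, r))%:R :> R.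
  by apply: sumr_ge0 => r _; apply: ler0n.
lra.
Qed.

Definition shift_at (lam : V -> R) (i : V) (t : R) : V -> R :=
  fun j => lam j + (if j == i then t else 0).

Lemma lagrangian_shift_at y lam i t :
  L y (shift_at lam i t) = L y lam + t * (nlabels y i - 1).
Proof.
rewrite /lagrangian -!addrA; congr (_ + (_ + _)).
under eq_bigr do rewrite mulrDl.
rewrite big_split /=; congr (_ + _).
rewrite (bigD1 i) //= eqxx [X in _ + X]big1 ?addr0 // => j /negbTE ->.
by rewrite mul0r.
Qed.

Lemma dual_le lam y : D lam <= L y lam.
Proof. exact: bigmin_le. Qed.

Lemma lt_dual lam m : (forall y, m < L y lam) -> m < D lam.
Proof. by move=> m_lt; apply/bigmin_gtP; split. Qed.

Lemma minimizer_of_dual lam y : L y lam = D lam -> is_min lam y.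
Proof. by move=> Ly_eq y'; rewrite Ly_eq dual_le. Qed.

Lemma dual_ascent lam i d :
  (forall y, is_min lam y -> 0 < d * (nlabels y i - 1)) ->
  exists lam', D lam < D lam'.
Proof.
move=> slope_pos.
have [e [_ He]] := min_affine_increase (dual_le lam)
  (fun y Ly_eq => slope_pos y (minimizer_of_dual Ly_eq)).
exists (shift_at lam i (e * d)); apply: lt_dual => y.
by rewrite lagrangian_shift_at -mulrA.
Qed.

End Lagrangian.

Theorem theorem2 (R : realType) (V P : finType)
  (E : {set V * V})
  (HEirr : forall i j : V, (i, j) \in E -> i != j)
  (HEuniq : forall i j : V, (i, j) \in E -> (j, i) \notin E)
  (theta1 : V -> P -> R) (theta2 : V -> V -> P -> P -> R)
  (lamstar : V -> R)
  (Hmax : forall lam : V -> R, dual theta1 theta2 E lam <= dual theta1 theta2 E lamstar) :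
  weak_agreement theta1 theta2 E lamstar.
Proof.
have no_ascent (i : V) (d : R) :
    ~ (forall y, is_minimizer theta1 theta2 E lamstar y ->
       0 < d * (nlabels y i - 1)).
  by move=> /dual_ascent [lam']; rewrite ltNge Hmax.
move=> i; split.
  apply: NNPP => no_label; apply: (no_ascent i (-1)) => y y_min.
  rewrite nlabels_eq0 => [|p]; first lra.
  by apply/negbTE/negP => yp; apply: no_label; exists p, y.
move=> p [_ p_not_false] q q_ne_p; apply: NNPP => q_not_false.
apply: (no_ascent i 1) => y y_min.
have yp : y (i, p) by apply: contra_notT p_not_false => /negbTE yp; exists y.
have yq : y (i, q) by apply: contra_notT q_not_false => /negbTE yq; exists y.
have two_le : 2 <= nlabels y i :> R by exact: nlabels_ge2 q_ne_p yq yp.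
lra.
Qed.
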